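(* Let $A$ be a flat layout and $N$ a positive integer. There exists an $N$-complement of $A$ if and only if $A$ is $N$-complementable.
   Context: A flat layout $L=(s_1,\dots,s_m):(d_1,\dots,d_m)$ has positive integer shape entries and nonnegative integer stride entries; $\mathrm{size}(L)=\prod s_i$, $\mathrm{cosize}(L)=1+\sum(s_i-1)d_i$; layout function $\Phi_L(x)=\sum x_id_i$, $x_i=\lfloor x/(s_1\cdots s_{i-1})\rfloor\bmod s_i$, on $[0,\mathrm{size}(L))$. $L$ is compact if $\Phi_L:[0,\mathrm{size}(L))\to[0,\mathrm{cosize}(L))$ is bijective. $A\star B$ denotes concatenation of shapes and of strides. A flat layout $B$ is an $N$-complement of $A$ if $A\star B$ is compact and $\mathrm{size}(A)\cdot\mathrm{size}(B)=N$. $\mathrm{squeeze}$ removes modes with $s_i=1$; $\mathrm{sort}$ stably reorders modes into nondecreasing order for $s:d\preceq s':d'$ iff $d<d'$ or ($d=d'$, $s\le s'$). $A$ is $N$-complementable if, writing $\mathrm{sort}(\mathrm{squeeze}(A))=(s_1,\dots,s_m):(d_1,\dots,d_m)$, $s_id_i\mid d_{i+1}$ for all $1\le i<m$ and $s_md_m\mid N$. *)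

From mathcomp Require Import all_boot.
Set Implicit Arguments. Unset Strict Implicit. Unset Printing Implicit Defensive.

(* A flat layout (s_1,...,s_m):(d_1,...,d_m) is represented as the sequence of
   modes [:: (s_1,d_1); ...; (s_m,d_m)] ; strides are nats (nonnegative). *)
Definition layout := seq (nat * nat).

Definition shape (L : layout) (i : nat) : nat := (nth (1, 0) L i).1.
Definition stride (L : layout) (i : nat) : nat := (nth (1, 0) L i).2.

Definition flat_layout (L : layout) : Prop := forall i, i < size L -> 0 < shape L i.

Definition lsize (L : layout) : nat := \prod_(i < size L) shape L i.

Definition cosize (L : layout) : nat := 1 + \sum_(i < size L) (shape L i - 1) * stride L i.

Definition coord (L : layout) (x i : nat) : nat :=
  (x %/ \prod_(j < i) shape L j) %% shape L i.

Definition Phi (L : layout) (x : nat) : nat :=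
  \sum_(i < size L) coord L x i * stride L i.

Definition compact (L : layout) : Prop :=
  [/\ (forall x, x < lsize L -> Phi L x < cosize L),
      (forall x y, x < lsize L -> y < lsize L -> Phi L x = Phi L y -> x = y)
    & (forall y, y < cosize L -> exists2 x, x < lsize L & Phi L x = y)].

Definition concat (A B : layout) : layout := A ++ B.

Definition complement (N : nat) (A B : layout) : Prop :=
  compact (concat A B) /\ lsize A * lsize B = N.

Definition squeeze (L : layout) : layout := [seq p <- L | p.1 != 1].

Definition mode_le (p q : nat * nat) : bool :=
  (p.2 < q.2) || ((p.2 == q.2) && (p.1 <= q.1)).

(* stable sort (mathcomp's merge sort is stable) *)
Definition lsort (L : layout) : layout := sort mode_le L.

Definition complementable (N : nat) (A : layout) : Prop :=
  let S := lsort (squeeze A) in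
  let m := size S in
  (forall i, i.+1 < m -> shape S i * stride S i %| stride S i.+1) /\
  (0 < m -> shape S m.-1 * stride S m.-1 %| N).

From Pilot Require Import Defs.
From mathcomp Require Import all_boot zify.
Set Implicit Arguments. Unset Strict Implicit. Unset Printing Implicit Defensive.

(* Call a layout a radix chain when its strides are 1, s_1, s_1 s_2, ... in the order
   of its modes.  A layout whose shapes all exceed 1 is compact iff it is a permutation
   of a radix chain: the value 1 is hit, so some mode s:1 has stride 1; uniqueness of
   its digit forces all other values, hence all other strides, to be multiples of s,
   and dividing them by s leaves a compact layout with one mode fewer.
   If A ⋆ B is compact of size N, the sorted nontrivial modes of A are therefore a
   subsequence of a radix chain of size N, which gives s_i d_i | d_(i+1) and
   s_m d_m | N.  Conversely, when these divisibilities hold, the modes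
   (d_(i+1) / (s_i d_i)) : (s_i d_i) filling the gaps before d_1, between consecutive
   modes and after s_m d_m interleave with them into a radix chain of size N, so they
   form an N-complement. *)

Lemma lsize_cons p L : lsize (p :: L) = p.1 * lsize L.
Proof. by rewrite /lsize /= big_ord_recl. Qed.

Lemma lsize_prod L : lsize L = \prod_(p <- L) p.1.
Proof.
by elim: L => [|p L IH]; rewrite ?big_nil ?big_cons -?IH ?lsize_cons // /lsize big_ord0.
Qed.

Lemma lsize_cat A B : lsize (A ++ B) = lsize A * lsize B.
Proof. by rewrite !lsize_prod big_cat. Qed.

Lemma lsize_perm L1 L2 : perm_eq L1 L2 -> lsize L1 = lsize L2.
Proof. by rewrite !lsize_prod; apply: perm_big. Qed.

Lemma lsize_squeeze L : lsize (squeeze L) = lsize L.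
Proof.
rewrite !lsize_prod big_filter [RHS](bigID (fun p => p.1 != 1)) /=.
by rewrite [X in _ * X]big1 ?muln1 // => p /negbNE/eqP.
Qed.

Lemma cosize_cons p L : cosize (p :: L) = (p.1 - 1) * p.2 + cosize L.
Proof. by rewrite /cosize /= big_ord_recl addnCA. Qed.

Lemma Phi_cons p L x : Phi (p :: L) x = x %% p.1 * p.2 + Phi L (x %/ p.1).
Proof.
rewrite /Phi /= big_ord_recl /coord big_ord0 divn1; congr (_ + _).
by apply: eq_bigr => i _; rewrite /coord /= big_ord_recl divnMA.
Qed.

Lemma flat_layoutP L : flat_layout L <-> all (fun p => 0 < p.1) L.
Proof.
split=> [fL | /all_nthP fL i]; last exact: fL.
by apply/(all_nthP (1, 0)) => i /fL.
Qed.

Lemma lsize_gt0 L : all (fun p => 0 < p.1) L -> 0 < lsize L.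
Proof. by rewrite lsize_prod big_seq => /allP L_gt0; apply: prodn_cond_gt0. Qed.

(* The values [Phi L x], [x < lsize L], listed with the first mode outermost
   (see [mem_img_Phi]). *)
Fixpoint img (L : layout) : seq nat :=
  if L is p :: L' then [seq x * p.2 + z | x <- iota 0 p.1, z <- img L'] else [:: 0].

Definition exact_image (L : layout) : Prop := forall y, (y \in img L) = (y < lsize L).

Lemma mem_img_cons p L y :
  y \in img (p :: L) <-> exists x z, [/\ x < p.1, z \in img L & y = x * p.2 + z].
Proof.
split=> [/allpairsP [[x z] /= [+ z_img ->]] | [x [z [lt_x z_img ->]]]].
  by rewrite mem_iota => lt_x; exists x, z.
by apply: allpairs_f; rewrite ?mem_iota.
Qed.

Lemma size_img L : size (img L) = lsize L.
Proof.
elim: L => [|p L IH] /=; first by rewrite /lsize big_ord0.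
by rewrite lsize_cons size_allpairs size_iota IH.
Qed.

Lemma mem0_img L : all (fun p => 0 < p.1) L -> 0 \in img L.
Proof.
elim: L => [|p L IH] //= /andP[p_gt0 /IH L0].
by apply/mem_img_cons; exists 0, 0.
Qed.

Lemma img_eq_cons p L1 L2 : img L1 =i img L2 -> img (p :: L1) =i img (p :: L2).
Proof.
move=> eqL y; apply/idP/idP => /mem_img_cons [x [z [lt_x z_img ->]]];
by apply/mem_img_cons; exists x, z; rewrite ?eqL // -eqL.
Qed.

Lemma img_swap a b L : img (a :: b :: L) =i img (b :: a :: L).
Proof.
suff img_sub c d : {subset img (c :: d :: L) <= img (d :: c :: L)}.
  by move=> y; apply/idP/idP; apply: img_sub.
move=> _ /mem_img_cons [x [_ [lt_x /mem_img_cons [x' [z [lt_x' z_img ->]]] ->]]].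
apply/mem_img_cons; exists x', (x * c.2 + z); split => //; last lia.
by apply/mem_img_cons; exists x, z.
Qed.

Lemma img_rem a L : a \in L -> img L =i img (a :: rem a L).
Proof.
elim: L => [|b L IH] //=; rewrite inE eq_sym; case: eqP => [-> // | _] /= aL y.
by rewrite img_swap; apply: img_eq_cons; apply: IH.
Qed.

Lemma img_perm L1 L2 : perm_eq L1 L2 -> img L1 =i img L2.
Proof.
elim: L1 L2 => [|a L1 IH] L2 eqL12; first by move: eqL12; rewrite perm_sym => /perm_nilP ->.
have aL2 : a \in L2 by rewrite -(perm_mem eqL12) mem_head.
move=> y; rewrite (img_rem aL2); apply: img_eq_cons; apply: IH.
by rewrite -(perm_cons a) (perm_trans eqL12) ?perm_to_rem.
Qed.

Lemma img_squeeze L : img (squeeze L) = img L.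
Proof.
elim: L => [|p L IH] //=; case: eqP => [p1 | _] /=; last by rewrite IH.
by rewrite p1 /= cats0 -[LHS]map_id IH; apply: eq_map => z; rewrite mul0n.
Qed.

Lemma img_lt_cosize L y : y \in img L -> y < cosize L.
Proof.
elim: L y => [|p L IH] y; first by rewrite inE /cosize big_ord0 => /eqP ->.
move=> /mem_img_cons [x [z [lt_x /IH lt_z ->]]]; rewrite cosize_cons.
have : x * p.2 <= (p.1 - 1) * p.2 by rewrite leq_mul2r; lia.
lia.
Qed.

Lemma cosize_pred_img L : all (fun p => 0 < p.1) L -> (cosize L).-1 \in img L.
Proof.
elim: L => [|p L IH]; first by rewrite /cosize big_ord0.
move=> /andP[p_gt0 /IH top_img]; rewrite cosize_cons; apply/mem_img_cons.
exists (p.1 - 1), (cosize L).-1; split => //; first lia.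
by rewrite -!subn1 addnBA.
Qed.

Lemma mem_img_Phi L y : all (fun p => 0 < p.1) L ->
  (y \in img L) = (y \in map (Phi L) (iota 0 (lsize L))).
Proof.
elim: L y => [|p L IH] y; first by rewrite /lsize big_ord0 /= /Phi big_ord0.
move=> /= /andP[p_gt0 L_gt0]; rewrite lsize_cons.
apply/idP/mapP => [/mem_img_cons [x [z [lt_x]]] | [k]].
  rewrite IH // => /mapP [j]; rewrite mem_iota add0n => /andP[_ lt_j] -> ->.
  exists (j * p.1 + x).
    have : j.+1 * p.1 <= lsize L * p.1 by rewrite leq_mul2r lt_j orbT.
    by rewrite mem_iota; lia.
  by rewrite Phi_cons modnMDl divnMDl // modn_small // divn_small ?addn0.
rewrite mem_iota add0n => /andP[_ lt_k] ->; apply/mem_img_cons.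
exists (k %% p.1), (Phi L (k %/ p.1)); split; [by rewrite ltn_mod | | by rewrite Phi_cons].
by rewrite IH // map_f // mem_iota add0n ltn_divLR // mulnC.
Qed.

Lemma uniq_exact_image L : exact_image L -> uniq (img L).
Proof.
move=> exL; apply: (leq_size_uniq (iota_uniq 0 (lsize L))).
  by move=> y; rewrite exL mem_iota.
by rewrite size_img size_iota.
Qed.

Lemma exact_image_perm L1 L2 : perm_eq L1 L2 -> exact_image L1 <-> exact_image L2.
Proof.
move=> eqL; split=> exL y.
  by rewrite -(img_perm eqL) exL (lsize_perm eqL).
by rewrite (img_perm eqL) exL (lsize_perm eqL).
Qed.

Lemma exact_image_squeeze L : exact_image (squeeze L) <-> exact_image L.
Proof. by rewrite /exact_image img_squeeze lsize_squeeze. Qed.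

Lemma compact_exact_image L : flat_layout L -> compact L <-> exact_image L.
Proof.
move/flat_layoutP=> L_gt0; set s := map (Phi L) (iota 0 (lsize L)).
have img_s y : (y \in img L) = (y \in s) by apply: mem_img_Phi.
split=> [[Phi_lt Phi_inj Phi_onto] | exL].
  have s_uniq : uniq s.
    by rewrite map_inj_in_uniq ?iota_uniq // => x y; rewrite !mem_iota; apply: Phi_inj.
  have s_range : s =i iota 0 (cosize L).
    move=> y; rewrite mem_iota; apply/mapP/idP => [[x] | /Phi_onto [x lt_x <-]].
      by rewrite mem_iota => /Phi_lt lt_y ->.
    by exists x; rewrite ?mem_iota.
  have := perm_size (uniq_perm s_uniq (iota_uniq 0 _) s_range).
  by rewrite size_map !size_iota => size_cosize y; rewrite img_s s_range mem_iota size_cosize.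
have size_cosize : lsize L = cosize L.
  have lt_size : (cosize L).-1 < lsize L by rewrite -exL cosize_pred_img.
  have lt_cosize : (lsize L).-1 < cosize L.
    by apply: img_lt_cosize; rewrite exL prednK ?lsize_gt0.
  have : 0 < lsize L by apply: lsize_gt0.
  by have : 0 < cosize L by []; lia.
have s_range : s =i iota 0 (lsize L) by move=> y; rewrite -img_s exL mem_iota.
have s_uniq : uniq s.
  apply: (leq_size_uniq (iota_uniq 0 (lsize L))); first by move=> y; rewrite s_range.
  by rewrite size_map !size_iota.
split=> [x lt_x | x y lt_x lt_y eq_xy | y].
- by rewrite -size_cosize -exL img_s map_f ?mem_iota.
- apply/eqP; rewrite -(nth_uniq 0 _ _ s_uniq) ?size_map ?size_iota //.
  by rewrite !(nth_map 0) ?size_iota // !nth_iota // eq_xy.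
- rewrite -size_cosize -exL img_s => /mapP [x].
  by rewrite mem_iota => /andP[_ lt_x] ->; exists x.
Qed.

Definition extent (p : nat * nat) : nat := p.1 * p.2.

(* [path radix_next (1, 1) C] says that [C] is a radix chain. *)
Definition radix_next (p q : nat * nat) : bool := (0 < q.1) && (q.2 == extent p).

Definition extent_dvd (p q : nat * nat) : bool := extent p %| q.2.

Lemma extent_dvd_trans : transitive extent_dvd.
Proof. by move=> q p r pq qr; apply: dvdn_trans pq (dvdn_trans (dvdn_mull _ _) qr). Qed.

Lemma radix_next_extent_dvd : subrel radix_next extent_dvd.
Proof. by move=> p q /andP[_ /eqP q2]; rewrite /extent_dvd q2. Qed.

Lemma radix_path_extent p p' C :
  extent p = extent p' -> path radix_next p C = path radix_next p' C.
Proof. by case: C => //= q C; rewrite /radix_next => ->. Qed.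

Lemma lsize_radix_path p C : path radix_next p C -> extent p * lsize C = extent (last p C).
Proof.
elim: C p => [|q C IH] p /=; first by rewrite /lsize big_ord0 muln1.
by case/andP=> /andP[_ /eqP q2] /IH <-; rewrite lsize_cons {2}/extent q2 mulnCA mulnA.
Qed.

Lemma img_radix_path p C :
  path radix_next p C -> img C =i map (muln (extent p)) (iota 0 (lsize C)).
Proof.
elim: C p => [|q C IH] p /=; first by move=> _ y; rewrite /lsize big_ord0 /= muln0.
case/andP=> /andP[q_gt0 /eqP q2] /IH imgC y; rewrite lsize_cons.
apply/idP/mapP => [/mem_img_cons [x [z [lt_x]]] | [k]].
  rewrite imgC => /mapP [j]; rewrite mem_iota add0n => /andP[_ lt_j] -> ->.
  exists (x + q.1 * j); last by rewrite [extent q]/extent q2; nia.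
  have : q.1 * j.+1 <= q.1 * lsize C by rewrite leq_mul2l lt_j orbT.
  by rewrite mem_iota; lia.
rewrite mem_iota add0n => /andP[_ lt_k] ->; apply/mem_img_cons.
exists (k %% q.1), (extent q * (k %/ q.1)); split; first by rewrite ltn_mod.
  by rewrite imgC map_f // mem_iota add0n ltn_divLR // mulnC.
by rewrite [extent q]/extent q2 {1}(divn_eq k q.1); nia.
Qed.

Lemma exact_image_radix_path C : path radix_next (1, 1) C -> exact_image C.
Proof.
move=> /img_radix_path imgC y.
by rewrite imgC /extent mul1n (eq_map mul1n) map_id mem_iota.
Qed.

Lemma all_gt1_gt0 (L : layout) : all (fun p => 1 < p.1) L -> all (fun p => 0 < p.1) L.
Proof. by apply: sub_all => p; apply: ltnW. Qed.

Lemma mem1_img L : 1 \in img L -> exists s, (s, 1) \in L.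
Proof.
elim: L => [|p L IH] //= /mem_img_cons [x [z [_ z_img eq1]]].
have [xp0 | ] := posnP (x * p.2).
  have [|s sL] := IH; first by rewrite eq1 xp0.
  by exists s; rewrite inE sL orbT.
rewrite muln_gt0 => /andP[x_gt0 p2_gt0].
have p2 : p.2 = 1 by nia.
by exists p.1; rewrite inE -p2 -surjective_pairing eqxx.
Qed.

Lemma stride_img p L : all (fun q => 0 < q.1) L -> p \in L -> 1 < p.1 -> p.2 \in img L.
Proof.
elim: L => [|q L IH] //= /andP[q_gt0 L_gt0]; rewrite inE => /predU1P [-> | pL] p_gt1.
  by apply/mem_img_cons; exists 1, 0; rewrite mem0_img // mul1n addn0.
by apply/mem_img_cons; exists 0, p.2; rewrite IH.
Qed.

Definition scale (s : nat) (L : layout) : layout := map (fun p => (p.1, s * p.2)) L.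

Lemma lsize_scale s L : lsize (scale s L) = lsize L.
Proof. by rewrite !lsize_prod big_map. Qed.

Lemma img_scale s L : img (scale s L) =i map (muln s) (img L).
Proof.
elim: L => [|p L IH] y; first by rewrite /= muln0.
apply/idP/mapP => [/mem_img_cons [x [z [lt_x]]] |].
  rewrite IH => /mapP [w w_img -> ->]; exists (x * p.2 + w); last by rewrite /=; lia.
  by apply/mem_img_cons; exists x, w.
move=> [w /mem_img_cons [x [z [lt_x z_img ->]]] ->].
by apply/mem_img_cons; exists x, (s * z); rewrite IH map_f //=; split=> //; lia.
Qed.

Lemma allpairs_uniq_inj (S T R : eqType) (f : S -> T -> R) s t x1 x2 y1 y2 :
  uniq s -> uniq [seq f x y | x <- s, y <- t] ->
  x1 \in s -> x2 \in s -> y1 \in t -> y2 \in t -> f x1 y1 = f x2 y2 -> x1 = x2.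
Proof.
move=> s_uniq st_uniq x1s x2s y1t y2t eq_f; apply: contraTeq st_uniq => neq_x.
rewrite (perm_uniq (perm_allpairs f (perm_to_rem x1s) (perm_refl t))) allpairs_cons.
rewrite cat_uniq; apply/negP => /and3P[_ /negP no_common _].
apply: no_common; apply/hasP; exists (f x2 y2).
  by apply: allpairs_f; rewrite // (mem_rem_uniq _ s_uniq) inE x2s andbT eq_sym.
by rewrite -eq_f map_f.
Qed.

(* Both directions go by strong induction on [n] and rest on the uniqueness of the
   decomposition [n = x + z] with [x < s] and [z \in img L]. *)
Lemma exact_image_unit_stride s L : 0 < s -> exact_image ((s, 1) :: L) ->
  forall n, (n \in img L) = (s %| n) && (n < s * lsize L).
Proof.
move=> s_gt0 exL; have img_uniq := uniq_exact_image exL.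
have {}exL n : (n \in img ((s, 1) :: L)) = (n < s * lsize L) by rewrite exL lsize_cons.
have unique_digit x1 x2 z1 z2 : x1 < s -> x2 < s -> z1 \in img L -> z2 \in img L ->
    x1 + z1 = x2 + z2 -> x1 = x2.
  move=> lt_x1 lt_x2 z1_img z2_img eq_xz.
  apply: (allpairs_uniq_inj (iota_uniq 0 s) img_uniq) z1_img z2_img _;
    by rewrite ?mem_iota ?muln1.
have img_lt n : n \in img L -> n < s * lsize L.
  by move=> n_img; rewrite -exL; apply/mem_img_cons; exists 0, n.
elim/ltn_ind=> n IH; apply/idP/andP => [n_img | [dvd_n]].
  split; last exact: img_lt.
  apply: contraT => ndvd_n; have r_gt0 : 0 < n %% s by rewrite lt0n.
  have m_img : n %/ s * s \in img L.
    by rewrite IH ?dvdn_mull //; have := img_lt n n_img; have := divn_eq n s; lia.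
  have := unique_digit _ 0 _ _ (ltn_pmod n s_gt0) s_gt0 m_img n_img.
  by rewrite addnC -divn_eq => /(_ erefl) r0; rewrite r0 in r_gt0.
rewrite -exL => /mem_img_cons [x [z [/= lt_x z_img]]]; rewrite muln1 => eq_n.
have [x0 | x_gt0] := posnP x; first by rewrite eq_n x0.
have /andP[dvd_z _] : (s %| z) && (z < s * lsize L) by rewrite -IH //; lia.
by move: dvd_n; rewrite eq_n dvdn_addl // => /(dvdn_leq x_gt0); lia.
Qed.

Lemma exact_image_unscale s L : 1 < s -> all (fun p => 1 < p.1) L ->
  exact_image ((s, 1) :: L) -> exists2 L', L = scale s L' & exact_image L'.
Proof.
move=> s_gt1 L_gt1 exL; have s_gt0 : 0 < s by lia.
have img_L := exact_image_unit_stride s_gt0 exL.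
set L' := map (fun p => (p.1, p.2 %/ s)) L.
have eqL : L = scale s L'.
  rewrite /scale -map_comp -[LHS]map_id; apply/eq_in_map => p pL /=.
  have /andP[dvd_p _] : (s %| p.2) && (p.2 < s * lsize L).
    by rewrite -img_L stride_img ?all_gt1_gt0 // (allP L_gt1).
  by rewrite mulnC divnK // -surjective_pairing.
have muln_inj : injective (muln s) by move=> a b /eqP; rewrite eqn_pmul2l // => /eqP.
exists L' => // y; rewrite -(mem_map muln_inj) -img_scale -eqL img_L dvdn_mulr //.
by rewrite eqL lsize_scale ltn_pmul2l.
Qed.

Lemma radix_path_scale s p C :
  path radix_next p C -> path radix_next (p.1, s * p.2) (scale s C).
Proof.
elim: C p => // q C IH p /= /andP[/andP[q_gt0 /eqP q2] /IH chainC].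
by rewrite chainC /radix_next /extent /= q_gt0 q2 /extent mulnCA eqxx.
Qed.

Lemma exact_image_perm_radix_path L : all (fun p => 1 < p.1) L -> exact_image L ->
  exists2 C, perm_eq L C & path radix_next (1, 1) C.
Proof.
have [n] := ubnP (size L); elim: n L => // n IH [|p L0] size_L L_gt1 exL.
  by exists [::].
set L := p :: L0 in size_L L_gt1 exL *.
have [s sL] : exists s, (s, 1) \in L.
  apply: mem1_img; rewrite exL lsize_cons.
  case/andP: L_gt1 => p_gt1 /all_gt1_gt0 /lsize_gt0; nia.
have s_gt1 : 1 < s := allP L_gt1 _ sL.
have eqL : perm_eq L ((s, 1) :: rem (s, 1) L) := perm_to_rem sL.
have rem_gt1 : all (fun q => 1 < q.1) (rem (s, 1) L).
  by apply/allP => q /mem_rem; apply: (allP L_gt1).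
have [L' eqL' exL'] := exact_image_unscale s_gt1 rem_gt1 ((exact_image_perm eqL).1 exL).
have [||C eqC chainC] := IH L' _ _ exL'.
- by rewrite -(size_map (fun q => (q.1, s * q.2))) -/(scale s L') -eqL' size_rem.
- by move: rem_gt1; rewrite eqL' all_map.
exists ((s, 1) :: scale s C); first by rewrite (perm_trans eqL) // perm_cons eqL' perm_map.
have := radix_path_scale s chainC.
rewrite (radix_path_extent _ (p' := (s, 1))) => [chain_sC | ]; last by rewrite /extent mul1n.
by rewrite /= chain_sC andbT /radix_next /= ltnW.
Qed.

Lemma squeeze_gt1 L : all (fun p => 0 < p.1) L -> all (fun p => 1 < p.1) (squeeze L).
Proof.
by rewrite all_filter => L_gt0; apply: sub_all L_gt0 => p /= p_gt0; apply/implyP; lia.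
Qed.

Lemma mode_le_total : total mode_le.
Proof. by move=> p q; rewrite /mode_le; lia. Qed.

Lemma mode_le_trans : transitive mode_le.
Proof. by move=> q p r; rewrite /mode_le; lia. Qed.

Lemma mode_le_anti : antisymmetric mode_le.
Proof. by move=> [a b] [c d]; rewrite /mode_le /= => le_abcd; congr pair; lia. Qed.

Lemma subseq_sort_cat (T : eqType) (leT : rel T) (s t u : seq T) :
  total leT -> transitive leT -> antisymmetric leT ->
  perm_eq (s ++ t) u -> sorted leT u -> subseq (sort leT s) u.
Proof.
move=> leT_total leT_tr leT_anti eq_u sorted_u.
rewrite -(sorted_sort leT_tr sorted_u) -(perm_sortP leT_total leT_tr leT_anti _ _ eq_u).
exact: subseq_sort (prefix_subseq s t).
Qed.

Lemma radix_path_mode_le p C : 0 < p.2 -> all (fun q => 1 < q.1) (p :: C) ->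
  path radix_next p C -> path mode_le p C.
Proof.
elim: C p => //= q C IH p p2_gt0 /and3P[p_gt1 q_gt1 C_gt1] /andP[/andP[_ /eqP q2] chainC].
have lt_pq : p.2 < q.2 by rewrite q2 /extent ltn_Pmull.
by rewrite /mode_le lt_pq IH //= ?q_gt1 // (ltn_trans p2_gt0).
Qed.

(* The sentinel modes (1,1) and (1,N) merge both divisibility conditions into one path. *)
Lemma complementableE N A :
  complementable N A <-> path extent_dvd (1, 1) (rcons (lsort (squeeze A)) (1, N)).
Proof.
rewrite /complementable rcons_path; case: (lsort (squeeze A)) => [|p T] /=.
  by split=> // _; rewrite /extent_dvd /extent dvd1n.
have sortedE := @sortedP _ extent_dvd (p :: T) (1, 0).
rewrite /Defs.shape /stride !nth_last /=; split=> [[/sortedE sortedT lastN] | ].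
  by apply/andP; split; [apply/andP; split; [exact: dvd1n | exact: sortedT] | exact: lastN].
by case/andP=> /andP[_ /sortedE sortedT] lastN; split=> // _.
Qed.

Lemma complement_complementable N A B :
  flat_layout A -> flat_layout B -> complement N A B -> complementable N A.
Proof.
move=> /flat_layoutP A_gt0 /flat_layoutP B_gt0 [cAB sizeAB].
have AB_gt0 : all (fun p => 0 < p.1) (A ++ B) by rewrite all_cat A_gt0.
have exAB : exact_image (squeeze (A ++ B)).
  by apply/exact_image_squeeze/compact_exact_image => //; apply/flat_layoutP.
have [C eqC chainC] := exact_image_perm_radix_path (squeeze_gt1 AB_gt0) exAB.
have sizeC : lsize C = N by rewrite -(lsize_perm eqC) lsize_squeeze lsize_cat.
have C_gt1 : all (fun p => 1 < p.1) C by rewrite -(perm_all _ eqC) squeeze_gt1.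
have sortedC : sorted mode_le C.
  case: C chainC C_gt1 {eqC sizeC} => //= q C /andP[/andP[_ /eqP q2] chainC] C_gt1.
  by apply: radix_path_mode_le; rewrite ?q2.
have subC : subseq (lsort (squeeze A)) C.
  apply: (subseq_sort_cat (t := squeeze B) mode_le_total mode_le_trans mode_le_anti _ sortedC).
  by rewrite -filter_cat.
apply/complementableE; apply: (subseq_path extent_dvd_trans (s2 := rcons C (1, N))).
  by rewrite -!cats1 cat_subseq.
rewrite rcons_path (sub_path radix_next_extent_dvd chainC) /extent_dvd /=.
by rewrite -(lsize_radix_path chainC) sizeC /extent !mul1n.
Qed.

Definition gap (p q : nat * nat) : nat * nat := (q.2 %/ extent p, extent p).

Fixpoint gaps (p : nat * nat) (U : layout) : layout :=
  if U is q :: U' then gap p q :: gaps q U' else [::].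

Fixpoint interleave (p : nat * nat) (U : layout) : layout :=
  if U is q :: U' then gap p q :: q :: interleave q U' else [::].

Lemma perm_interleave p U : perm_eq (U ++ gaps p U) (interleave p U).
Proof.
elim: U p => //= q U IH p.
apply: (@perm_trans _ (gap p q :: q :: (U ++ gaps q U))); last by rewrite !perm_cons.
exact: permEl (perm_catCA (q :: U) [:: gap p q] (gaps q U)).
Qed.

Lemma last_interleave p U : last p (interleave p U) = last p U.
Proof. by elim: U p => //= q U IH p; apply: IH. Qed.

Lemma extent_dvd_path_gt0 p U : path extent_dvd p U -> 0 < extent (last p U) -> 0 < extent p.
Proof.
elim: U p => //= q U IH p /andP[pq /IH q_gt0 /q_gt0]; rewrite muln_gt0 => /andP[_ q2_gt0].
exact: dvdn_gt0 q2_gt0 pq.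
Qed.

Lemma interleave_radix_path p U : path extent_dvd p U -> 0 < extent (last p U) ->
  path radix_next p (interleave p U).
Proof.
elim: U p => //= q U IH p /andP[pq dvdU] last_gt0.
have := extent_dvd_path_gt0 dvdU last_gt0; rewrite muln_gt0 => /andP[q1_gt0 q2_gt0].
have p_gt0 : 0 < extent p := dvdn_gt0 q2_gt0 pq.
rewrite IH // andbT /radix_next /gap /= eqxx q1_gt0 andbT.
rewrite -[extent (_, _)]/(q.2 %/ extent p * extent p) divnK // eqxx andbT.
by rewrite divn_gt0 // dvdn_leq.
Qed.

Lemma radix_path_shape_gt0 p C : path radix_next p C -> all (fun q => 0 < q.1) C.
Proof. by elim: C p => //= q C IH p /andP[/andP[-> _] /IH]. Qed.

Lemma complementable_complement N A : flat_layout A -> 0 < N -> complementable N A ->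
  exists B, flat_layout B /\ complement N A B.
Proof.
move=> /flat_layoutP A_gt0 N_gt0 /complementableE; set U := rcons _ (1, N) => dvdU.
have lastU : last (1, 1) U = (1, N) by rewrite last_rcons.
have chainC : path radix_next (1, 1) (interleave (1, 1) U).
  by apply: interleave_radix_path; rewrite // lastU /extent mul1n.
set C := interleave (1, 1) U in chainC; set B := gaps (1, 1) U.
have eqC : perm_eq (squeeze (A ++ B)) (squeeze C).
  apply: perm_trans (perm_filter _ (perm_interleave (1, 1) U)).
  rewrite /squeeze !filter_cat perm_cat2r filter_rcons /= -[X in perm_eq X _]filter_id.
  by apply: perm_filter; rewrite perm_sym /lsort perm_sort.
have B_gt0 : all (fun q => 0 < q.1) B.
  apply/allP => q qB; apply: (allP (radix_path_shape_gt0 chainC)).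
  by rewrite -(perm_mem (perm_interleave _ _)) mem_cat qB orbT.
exists B; split; first exact/flat_layoutP.
split; last first.
  have := lsize_radix_path chainC; rewrite last_interleave lastU /extent /= !mul1n => <-.
  by rewrite -lsize_cat -lsize_squeeze (lsize_perm eqC) lsize_squeeze.
apply/compact_exact_image; first by apply/flat_layoutP; rewrite all_cat A_gt0.
apply/exact_image_squeeze/(exact_image_perm eqC)/exact_image_squeeze.
exact: exact_image_radix_path.
Qed.

Theorem mainTheorem14 (A : layout) (N : nat) :
  flat_layout A -> 0 < N ->
  (exists B : layout, flat_layout B /\ complement N A B) <-> complementable N A.
Proof.
move=> flatA N_gt0; split; last exact: complementable_complement.
by case=> B [flatB complB]; apply: complement_complementable complB.
Qed.
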